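(* Let $\lambda>0$, $\xi>0$, $v_2<v_1$ with either $v_2<0<v_1$ or $0<v_2<v_1$, and let $\tilde X(t)$ be the position of the extended telegraph process driven by GCPs with parameter $\lambda$ with Poissonian resets to the origin at rate $\xi$. Write $E_j[\cdot]=E[\cdot\,|\,\tilde X(0)=0,V(0)=v_j]$ and $G_\xi(t)=\Gamma[0,\frac\xi\lambda,\frac\xi\lambda(1+\lambda t)]$. Then for all $t>0$ and $j=1,2$, $$ E_j[\tilde X(t)]=(1-e^{-\xi t})\Big(\frac{v_1+v_2}{2\xi}+\frac{v_j-v_{3-j}}{2\lambda}\Big)-\frac{\xi e^{\xi/\lambda}(v_j-v_{3-j})}{2\lambda^2}G_\xi(t)+\frac{te^{-\xi t}(v_j-v_{3-j})}{2(1+\lambda t)}, $$ $$ \begin{aligned} E_j[\tilde X^2(t)]&=(1-e^{-\xi t})\Big[\frac{2(v_1^2+v_1v_2+v_2^2)}{3\xi^2}+\frac{2v_j^2-v_1v_2-v_{3-j}^2}{3\lambda}\Big(\frac1\xi-\frac1\lambda\Big)\Big]\\ &\quad-te^{-\xi t}\Big[\frac{2(v_1^2+v_1v_2+v_2^2)}{3\xi}+\frac{2v_j^2-v_1v_2-v_{3-j}^2}{3\lambda(1+\lambda t)}\Big]+\frac{\xi e^{\xi/\lambda}(2v_j^2-v_1v_2-v_{3-j}^2)}{3\lambda^3}G_\xi(t). \end{aligned} $$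
   Context: GCP with intensity $\lambda>0$: a Poisson process whose rate is random, exponentially distributed with mean $\lambda$; increments satisfy $P\{\tilde N_\lambda(t+s)-\tilde N_\lambda(t)=k\}=\frac{1}{1+\lambda s}(\frac{\lambda s}{1+\lambda s})^k$. The process: a particle starts at the origin with velocity $V(0)=v_j$ ($v_1,v_2\ne0$, $v_2<v_1$), moves with velocity alternating between $v_1$ and $v_2$, the periods at velocity $v_1$ and at $v_2$ being governed by two independent GCPs of intensity $\lambda$; additionally it is instantaneously reset to the origin at the epochs of an independent Poisson process of rate $\xi$, restarting afresh with velocity $v_j$. Equivalently the law of $\tilde X(t)$ given $V(0)=v_j$ has generalized density $\tilde p(x,t|v_j)=e^{-\xi t}p(x,t|v_j)+\xi\int_0^te^{-\xi s}p(x,s|v_j)ds$ with $p(x,t|v_j)=\frac{\delta(x-v_jt)}{1+\lambda t}+\mathbb 1_{\{v_2t<x<v_1t\}}\frac{\lambda}{(v_1-v_2)(1+\lambda t)}$ ($\delta$ Dirac delta). $\Gamma(a,z_0,z_1)=\int_{z_0}^{z_1}s^{a-1}e^{-s}ds$. *)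

From Stdlib Require Import Reals.
From Coquelicot Require Import Coquelicot.
Open Scope R_scope.

Definition vel (v1 v2 : R) (j : nat) : R := if Nat.eqb j 1 then v1 else v2.

Definition Gamma3 (a z0 z1 : R) : R :=
  RInt (fun s => Rpower s (a - 1) * exp (- s)) z0 z1.

(* Integral of f against the generalized density (without resetting)
   p(x,s|v_j) = delta(x - v_j s)/(1+lam s)
              + 1_{v2 s < x < v1 s} lam/((v1-v2)(1+lam s)),
   the Dirac part being integrated out literally as f(v_j s). *)
Definition p_int (lam v1 v2 : R) (j : nat) (f : R -> R) (s : R) : R :=
  f (vel v1 v2 j * s) / (1 + lam * s)
  + lam / ((v1 - v2) * (1 + lam * s)) * RInt f (v2 * s) (v1 * s).

(* Integral of f against the law of X~(t) given V(0) = v_j, i.e. against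
   p~(x,t|v_j) = e^{-xi t} p(x,t|v_j) + xi int_0^t e^{-xi s} p(x,s|v_j) ds.
   So E_j[f(X~(t))] = ptilde_int lam xi v1 v2 j f t. *)
Definition ptilde_int (lam xi v1 v2 : R) (j : nat) (f : R -> R) (t : R) : R :=
  exp (- xi * t) * p_int lam v1 v2 j f t
  + xi * RInt (fun s => exp (- xi * s) * p_int lam v1 v2 j f s) 0 t.

Definition EX (lam xi v1 v2 : R) (j : nat) (t : R) : R :=
  ptilde_int lam xi v1 v2 j (fun x => x) t.
Definition EX2 (lam xi v1 v2 : R) (j : nat) (t : R) : R :=
  ptilde_int lam xi v1 v2 j (fun x => x ^ 2) t.

Definition Gxi (lam xi t : R) : R :=
  Gamma3 0 (xi / lam) (xi / lam * (1 + lam * t)).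

(** Conditioning on the last reset before [t] (rate [xi]), a moment of the
    reset process is the average [e^{-xi t} m(t) + xi int_0^t e^{-xi s} m(s) ds]
    of the corresponding moment [m] without resets.  Integrating the density
    [p], the first and second moments are [m(s) = beta s^k + c s^k / (1 + lam s)]
    with [k = 1, 2].  Against [e^{-xi s}] the polynomial parts integrate in
    closed form, and what remains is [int_0^t e^{-xi s} / (1 + lam s) ds], which
    the substitution [z = xi (1 + lam s) / lam] turns into
    [e^{xi/lam} G_xi(t) / lam]. *)

From Stdlib Require Import Reals Lra.
From Coquelicot Require Import Coquelicot.
Open Scope R_scope.

Lemma RInt_antiderivative_plus (g q F : R -> R) (a b Q : R) :
  is_RInt q a b Q ->
  (forall u, Rmin a b <= u <= Rmax a b -> is_derive F u (g u - q u)) ->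
  (forall u, Rmin a b <= u <= Rmax a b -> continuous (fun u => g u - q u) u) ->
  RInt g a b = F b - F a + Q.
Proof.
  intros HQ HF Hcont.
  apply is_RInt_unique.
  assert (Hdiff := is_RInt_derive (V := R_CompleteNormedModule) F _ a b HF Hcont).
  eapply is_RInt_ext; [| exact (is_RInt_plus _ _ _ _ _ _ Hdiff HQ)].
  intros u _. cbn. unfold plus; cbn. ring.
Qed.

Lemma RInt_id (a b : R) : RInt (fun x => x) a b = (b ^ 2 - a ^ 2) / 2.
Proof.
  rewrite (RInt_ext _ (fun x => x ^ 1)) by (intros; simpl; ring).
  rewrite (is_RInt_unique _ _ _ _ (is_RInt_pow a b 1)). cbn. field.
Qed.

Lemma RInt_sqr (a b : R) : RInt (fun x => x ^ 2) a b = (b ^ 3 - a ^ 3) / 3.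
Proof. rewrite (is_RInt_unique _ _ _ _ (is_RInt_pow a b 2)). cbn. field. Qed.

Lemma Gxi_is_RInt (lam xi t : R) : 0 < lam -> 0 < xi -> 0 <= t ->
  is_RInt (fun s => exp (- xi * s) / (1 + lam * s)) 0 t
    (exp (xi / lam) / lam * Gxi lam xi t).
Proof.
  intros Hlam Hxi Ht.
  set (z := fun s => xi / lam * (1 + lam * s)).
  assert (Hz_pos : forall s, 0 <= s -> 0 < z s).
  { intros s Hs. apply Rmult_lt_0_compat; [apply Rdiv_lt_0_compat |]; nra. }
  assert (Hsubst : is_RInt (fun y => scal xi (Rpower (z y) (0 - 1) * exp (- z y))) 0 t
                      (RInt (fun s => Rpower s (0 - 1) * exp (- s)) (z 0) (z t))).
  { apply (is_RInt_comp (V := R_CompleteNormedModule));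
      rewrite Rmin_left, Rmax_right by lra; intros u Hu.
    - apply (ex_derive_continuous (K := R_AbsRing) (V := R_NormedModule)).
      unfold Rpower. auto_derive. apply Hz_pos. lra.
    - split; [| apply continuous_const].
      unfold z. auto_derive; [auto | field; lra]. }
  unfold Gxi, Gamma3.
  replace (xi / lam) with (z 0) at 2 by (unfold z; ring).
  eapply is_RInt_ext; [| exact (is_RInt_scal _ _ _ (exp (xi / lam) / lam) _ Hsubst)].
  rewrite Rmin_left, Rmax_right by lra. intros s Hs.
  cbn. unfold mult; cbn.
  replace (0 - 1) with (- (1)) by ring.
  rewrite Rpower_Ropp, Rpower_1 by (apply Hz_pos; lra).
  replace (- z s) with (- (xi / lam) + - xi * s) by (unfold z; field; lra).
  rewrite exp_plus, exp_Ropp.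
  assert (Hexp := exp_pos (xi / lam)).
  unfold z. field. nra.
Qed.

Lemma p_int_id (lam v1 v2 : R) (j : nat) (s : R) :
  v1 <> v2 -> 1 + lam * s <> 0 ->
  p_int lam v1 v2 j (fun x => x) s =
    (v1 + v2) / 2 * s + (vel v1 v2 j - (v1 + v2) / 2) * (s / (1 + lam * s)).
Proof.
  intros Hv Hs. unfold p_int. rewrite RInt_id.
  field. split; [exact Hs | lra].
Qed.

Lemma p_int_sqr (lam v1 v2 : R) (j : nat) (s : R) :
  v1 <> v2 -> 1 + lam * s <> 0 ->
  p_int lam v1 v2 j (fun x => x ^ 2) s =
    (v1 ^ 2 + v1 * v2 + v2 ^ 2) / 3 * s ^ 2
    + (vel v1 v2 j ^ 2 - (v1 ^ 2 + v1 * v2 + v2 ^ 2) / 3) * (s ^ 2 / (1 + lam * s)).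
Proof.
  intros Hv Hs. unfold p_int. rewrite RInt_sqr.
  field. split; [exact Hs | lra].
Qed.

Definition reset_average (xi : R) (m : R -> R) (t : R) : R :=
  exp (- xi * t) * m t + xi * RInt (fun s => exp (- xi * s) * m s) 0 t.

Lemma reset_average_ext (xi : R) (m m' : R -> R) (t : R) : 0 <= t ->
  (forall s, 0 <= s <= t -> m s = m' s) ->
  reset_average xi m t = reset_average xi m' t.
Proof.
  intros Ht Hm. unfold reset_average.
  rewrite Hm by lra. f_equal. f_equal.
  apply RInt_ext. rewrite Rmin_left, Rmax_right by lra.
  intros s Hs. rewrite Hm by lra. reflexivity.
Qed.

Lemma reset_average_pow1_frac (lam xi beta c t : R) :
  0 < lam -> 0 < xi -> 0 <= t ->
  reset_average xi (fun s => beta * s + c * (s / (1 + lam * s))) t =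
    (1 - exp (- xi * t)) * (beta / xi + c / lam)
    - xi * exp (xi / lam) * c / lam ^ 2 * Gxi lam xi t
    + t * exp (- xi * t) * c / (1 + lam * t).
Proof.
  intros Hlam Hxi Ht. unfold reset_average.
  (* c s / (1 + lam s) = c / lam - (c / lam) / (1 + lam s) *)
  rewrite (RInt_antiderivative_plus _
    (fun s => - (c / lam) * (exp (- xi * s) / (1 + lam * s)))
    (fun u => - exp (- xi * u) * (beta * u + c / lam) / xi - beta * exp (- xi * u) / xi ^ 2)
    0 t (- (c / lam) * (exp (xi / lam) / lam * Gxi lam xi t))).
  - rewrite Rmult_0_r, exp_0. field. split; nra.
  - exact (is_RInt_scal _ _ _ _ _ (Gxi_is_RInt lam xi t Hlam Hxi Ht)).
  - rewrite Rmin_left, Rmax_right by lra. intros u Hu.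
    auto_derive; [nra | field; split; nra].
  - rewrite Rmin_left, Rmax_right by lra. intros u Hu.
    apply (ex_derive_continuous (K := R_AbsRing) (V := R_NormedModule)).
    auto_derive. nra.
Qed.

Lemma reset_average_pow2_frac (lam xi beta c t : R) :
  0 < lam -> 0 < xi -> 0 <= t ->
  reset_average xi (fun s => beta * s ^ 2 + c * (s ^ 2 / (1 + lam * s))) t =
    (1 - exp (- xi * t)) * (2 * beta / xi ^ 2 + c / lam * (1 / xi - 1 / lam))
    - t * exp (- xi * t) * (2 * beta / xi + c / (lam * (1 + lam * t)))
    + xi * exp (xi / lam) * c / lam ^ 3 * Gxi lam xi t.
Proof.
  intros Hlam Hxi Ht. unfold reset_average.
  (* c s^2 / (1 + lam s) = c (s / lam - 1 / lam^2) + (c / lam^2) / (1 + lam s) *)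
  rewrite (RInt_antiderivative_plus _
    (fun s => c / lam ^ 2 * (exp (- xi * s) / (1 + lam * s)))
    (fun u => - exp (- xi * u) *
       ((beta * u ^ 2 + c / lam * u - c / lam ^ 2) / xi
        + (2 * beta * u + c / lam) / xi ^ 2 + 2 * beta / xi ^ 3))
    0 t (c / lam ^ 2 * (exp (xi / lam) / lam * Gxi lam xi t))).
  - rewrite Rmult_0_r, exp_0. field. split; nra.
  - exact (is_RInt_scal _ _ _ _ _ (Gxi_is_RInt lam xi t Hlam Hxi Ht)).
  - rewrite Rmin_left, Rmax_right by lra. intros u Hu.
    auto_derive; [nra | field; split; nra].
  - rewrite Rmin_left, Rmax_right by lra. intros u Hu.
    apply (ex_derive_continuous (K := R_AbsRing) (V := R_NormedModule)).
    auto_derive. nra.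
Qed.

Theorem theorem5 (lam xi v1 v2 : R) (j : nat) (t : R) :
  0 < lam -> 0 < xi -> v2 < v1 ->
  (v2 < 0 < v1 \/ 0 < v2 < v1) ->
  (j = 1%nat \/ j = 2%nat) -> 0 < t ->
  let vj := vel v1 v2 j in
  let vo := vel v1 v2 (3 - j) in
  EX lam xi v1 v2 j t =
    (1 - exp (- xi * t)) * ((v1 + v2) / (2 * xi) + (vj - vo) / (2 * lam))
    - xi * exp (xi / lam) * (vj - vo) / (2 * lam ^ 2) * Gxi lam xi t
    + t * exp (- xi * t) * (vj - vo) / (2 * (1 + lam * t))
  /\
  EX2 lam xi v1 v2 j t =
    (1 - exp (- xi * t)) *
      (2 * (v1 ^ 2 + v1 * v2 + v2 ^ 2) / (3 * xi ^ 2)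
       + (2 * vj ^ 2 - v1 * v2 - vo ^ 2) / (3 * lam) * (1 / xi - 1 / lam))
    - t * exp (- xi * t) *
      (2 * (v1 ^ 2 + v1 * v2 + v2 ^ 2) / (3 * xi)
       + (2 * vj ^ 2 - v1 * v2 - vo ^ 2) / (3 * lam * (1 + lam * t)))
    + xi * exp (xi / lam) * (2 * vj ^ 2 - v1 * v2 - vo ^ 2) / (3 * lam ^ 3)
      * Gxi lam xi t.
Proof.
  intros Hlam Hxi Hv _ Hj Ht vj vo.
  assert (Hv12 : v1 <> v2) by lra.
  assert (Hden : forall s, 0 <= s <= t -> 1 + lam * s <> 0) by (intros; nra).
  assert (Hmean := fun s Hs => p_int_id lam v1 v2 j s Hv12 (Hden s Hs)).
  assert (Hsecond := fun s Hs => p_int_sqr lam v1 v2 j s Hv12 (Hden s Hs)).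
  unfold EX, EX2.
  change (ptilde_int lam xi v1 v2 j ?f t) with (reset_average xi (p_int lam v1 v2 j f) t).
  rewrite (reset_average_ext _ _ _ _ (Rlt_le _ _ Ht) Hmean),
    (reset_average_ext _ _ _ _ (Rlt_le _ _ Ht) Hsecond),
    reset_average_pow1_frac, reset_average_pow2_frac by lra.
  assert (Hdt : 1 + lam * t <> 0) by nra.
  unfold vj, vo; destruct Hj as [-> | ->]; cbn; split; field; repeat split; lra.
Qed.
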